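(* Let $N$ be a prime and $m$ a positive integer prime to $N$ with $m<N^2/4$. Then every non-cuspidal point in the support of the divisor $i_{\{1,2\}}^*\widetilde{C}_m$ on $X_{\mathrm{ns}}(N)$ is a Heegner point in the sense of Kohen--Pacetti.
   Context: Fix a non-square $\varepsilon\in\mathbb{F}_N$. Non-cuspidal points of $X_{\mathrm{ns}}(N)$ correspond to isomorphism classes of pairs $(E,\phi_\varepsilon)$ with $E$ an elliptic curve and $\phi_\varepsilon$ an endomorphism of $E[N]$ with $\phi_\varepsilon^2=\varepsilon$; $(E,\phi)\cong(E',\phi')$ if there is an isomorphism $\psi:E\to E'$ with $\psi\circ\phi=\phi'\circ\psi$ on $E[N]$. For $m$ prime to $N$, $X_{\mathrm{ns}}(N,m)$ parametrises triples $(E,\phi_\varepsilon,C)$ with $C\subset E$ cyclic of order $m$; the Hecke correspondence $\widetilde{C}_m\subset X_{\mathrm{ns}}(N)\times X_{\mathrm{ns}}(N)$ is the image of $X_{\mathrm{ns}}(N,m)$ under $(E,\phi_\varepsilon,C)\mapsto\big((E,\phi_\varepsilon),(E/C,\overline{\pi_C}\phi_\varepsilon\overline{\pi_C}^{-1})\big)$, with $\pi_C:E\to E/C$ and $\overline{\pi_C}$ its restriction to $E[N]$. $i_{\{1,2\}}$ is the diagonal embedding. $(E,\phi_\varepsilon)$ is a Heegner point (Kohen--Pacetti) if $\mathrm{End}(E)$ is an order of conductor prime to $N$ in an imaginary quadratic field and $\phi_\varepsilon$ is induced by an endomorphism of $E$. *)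

From Stdlib Require Import Reals ZArith Znumtheory.
From Coquelicot Require Import Coquelicot.

(* Complex-analytic model (over C) of elliptic curves: E = C / L for a lattice L.
   Sets are predicates [C -> Prop]. *)

Definition zc (k : Z) : C := RtoC (IZR k).

(* L is a lattice: Z w1 + Z w2 with w1, w2 R-linearly independent *)
Definition is_lattice (L : C -> Prop) : Prop :=
  exists w1 w2 : C,
    Im (Cmult w2 (Cconj w1)) <> 0%R /\
    forall z, L z <-> exists a b : Z, z = Cplus (Cmult (zc a) w1) (Cmult (zc b) w2).

(* congruence modulo L (equality in C/L) *)
Definition congr (L : C -> Prop) (z w : C) : Prop := L (Cminus z w).

(* z represents a point of E[N], E = C/L *)
Definition Ntors (L : C -> Prop) (N : Z) (z : C) : Prop := L (Cmult (zc N) z).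

(* phi : C -> C represents an endomorphism of the group E[N] (E = C/L) *)
Definition EndN (L : C -> Prop) (N : Z) (phi : C -> C) : Prop :=
  (forall z, Ntors L N z -> Ntors L N (phi z)) /\
  (forall z w, Ntors L N z -> Ntors L N w -> congr L z w -> congr L (phi z) (phi w)) /\
  (forall z w, Ntors L N z -> Ntors L N w ->
     congr L (phi (Cplus z w)) (Cplus (phi z) (phi w))).

Definition sq_eps (L : C -> Prop) (N eps : Z) (phi : C -> C) : Prop :=
  forall z, Ntors L N z -> congr L (phi (phi z)) (Cmult (zc eps) z).

(* a non-cuspidal point of X_ns(N) represented by (E = C/L, phi_eps) *)
Definition ns_pair (L : C -> Prop) (N eps : Z) (phi : C -> C) : Prop :=
  is_lattice L /\ EndN L N phi /\ sq_eps L N eps phi.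

(* (C/L1, phi1) ≅ (C/L2, phi2): an isomorphism C/L1 -> C/L2 is z |-> u z with u L1 = L2 *)
Definition iso_pair (L1 : C -> Prop) (phi1 : C -> C) (L2 : C -> Prop) (phi2 : C -> C)
  (N : Z) : Prop :=
  exists u : C, u <> RtoC 0%R /\
    (forall z, L1 z <-> L2 (Cmult u z)) /\
    (forall z, Ntors L1 N z -> congr L2 (Cmult u (phi1 z)) (phi2 (Cmult u z))).

(* A cyclic subgroup C of order m of C/L, described by its preimage L' in C,
   so that E/C = C/L' and pi_C is induced by the identity of C. *)
Definition cyclic_over (L L' : C -> Prop) (m : Z) : Prop :=
  (forall z, L z -> L' z) /\
  exists g : C,
    (forall z, L' z <-> exists (k : Z) (l : C), L l /\ z = Cplus l (Cmult (zc k) g)) /\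
    (forall k : Z, L (Cmult (zc k) g) <-> (m | k)%Z).

(* (E, phi) with E = C/L lies in the support of i_{1,2}^* C~_m:
   there is C cyclic of order m with (E/C, pi_C phi pi_C^{-1}) ≅ (E, phi).
   The transported structure phi' on (E/C)[N] is characterised by
   phi' o pi_C = pi_C o phi on E[N]. *)
Definition in_support_diag_Hecke (L : C -> Prop) (N m : Z) (phi : C -> C) : Prop :=
  exists (L' : C -> Prop) (phi' : C -> C),
    is_lattice L' /\ cyclic_over L L' m /\ EndN L' N phi' /\
    (forall z, Ntors L N z -> congr L' (phi' z) (phi z)) /\
    iso_pair L' phi' L phi N.

Definition End_lat (L : C -> Prop) (a : C) : Prop :=
  forall z, L z -> L (Cmult a z).

Definition squarefreeZ (k : Z) : Prop :=
  forall p : Z, (p * p | k)%Z -> p = 1%Z \/ p = (-1)%Z.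

Definition fundamental_disc (d : Z) : Prop :=
  (d mod 4 = 1 /\ squarefreeZ d)%Z \/
  (exists k : Z, d = (4 * k)%Z /\ ((k mod 4 = 2)%Z \/ (k mod 4 = 3)%Z) /\ squarefreeZ k).

(* O is an order in an imaginary quadratic field K, of conductor f:
   O = Z[tau] with tau non-real, tau^2 - t tau + n = 0, and
   disc(O) = t^2 - 4n = f^2 d_K with d_K the fundamental discriminant of K. *)
Definition imag_quad_order_of_conductor (O : C -> Prop) (f : Z) : Prop :=
  (0 < f)%Z /\
  exists (tau : C) (t n d : Z),
    Im tau <> 0%R /\
    Cmult tau tau = Cminus (Cmult (zc t) tau) (zc n) /\
    (forall z, O z <-> exists a b : Z, z = Cplus (zc a) (Cmult (zc b) tau)) /\
    (t * t - 4 * n = f * f * d)%Z /\ fundamental_disc d.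

Definition heegner (L : C -> Prop) (N : Z) (phi : C -> C) : Prop :=
  (exists f : Z, Z.gcd f N = 1%Z /\ imag_quad_order_of_conductor (End_lat L) f) /\
  exists alpha : C, End_lat L alpha /\
    forall z, Ntors L N z -> congr L (phi z) (Cmult alpha z).

Definition nonsquare_mod (eps N : Z) : Prop :=
  ~ exists x : Z, ((x * x - eps) mod N = 0)%Z.

From Stdlib Require Import Reals ZArith Znumtheory Lra Lia Psatz Zwf Classical Wf_nat.
From Coquelicot Require Import Coquelicot.

(* A point [(C/L, phi)] in the support of [i^* C_m] carries a cyclic [m]-isogeny
   [C/L -> C/L'] followed by an isomorphism [C/L' = C/L], i.e. multiplication by some
   [u] with [u L' = L]: an endomorphism of [C/L] of degree [|u|^2 <= m] that commutes with
   [phi] on [E[N]].  Since [m > 1], [u] is not real, so [End(L) = Z[tau]] is an imaginary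
   quadratic order with [|disc| = 4 Im(tau)^2 <= 4 Im(u)^2 <= 4m < N^2]; its conductor is
   therefore prime to [N].
   If [u] were scalar modulo [N], say [u = a + N v], then [Im(u)^2 = N^2 Im(v)^2 >= N^2/4 > m].
   So [u] acts on [E[N] = F_N^2] as a non-scalar matrix, whose centraliser is [F_N[u]];
   [phi] commutes with it, hence [phi = mu + lam u] on [E[N]]. *)

Lemma zc_add a b : zc (a + b) = Cplus (zc a) (zc b).
Proof. unfold zc. now rewrite plus_IZR, RtoC_plus. Qed.

Lemma zc_mul a b : zc (a * b) = Cmult (zc a) (zc b).
Proof. unfold zc. now rewrite mult_IZR, RtoC_mult. Qed.

Lemma zc_opp a : zc (- a) = Copp (zc a).
Proof. unfold zc. now rewrite opp_IZR, RtoC_opp. Qed.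

Lemma zc_sub a b : zc (a - b) = Cminus (zc a) (zc b).
Proof. unfold zc. now rewrite minus_IZR, RtoC_minus. Qed.

Lemma zc_0 : zc 0 = RtoC 0.
Proof. reflexivity. Qed.

Lemma zc_1 : zc 1 = RtoC 1.
Proof. reflexivity. Qed.

Lemma zc_neq0 k : k <> 0%Z -> zc k <> RtoC 0.
Proof. intros Hk E. apply Hk, eq_IZR_R0. now injection E. Qed.

Lemma Im_zc_comb (a b : Z) (tau : C) : Im (Cplus (zc a) (Cmult (zc b) tau)) = (IZR b * Im tau)%R.
Proof. destruct tau. unfold Im, Cmult, Cplus, zc, RtoC; simpl. ring. Qed.

Ltac zc_push := repeat rewrite ?zc_add, ?zc_mul, ?zc_opp, ?zc_sub.

Lemma Z_least_pos (P : Z -> Prop) : (exists k, 0 < k /\ P k)%Z ->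
  exists k0, (0 < k0 /\ P k0 /\ forall k, 0 < k -> P k -> k0 <= k)%Z.
Proof.
  intros [k [Hk Pk]].
  set (Q n := P (Z.of_nat (S n))).
  assert (HQ : exists n, Q n).
  { exists (Z.to_nat (k - 1)). unfold Q. now replace (Z.of_nat (S (Z.to_nat (k - 1)))) with k by lia. }
  destruct (dec_inh_nat_subset_has_unique_least_element Q (fun n => classic (Q n)) HQ)
    as [n0 [[Qn0 Hmin] _]].
  exists (Z.of_nat (S n0)). split; [lia |]. split; [exact Qn0 |].
  intros k' Hk' Pk'. assert (Q (Z.to_nat (k' - 1))) as Qk'.
  { unfold Q. now replace (Z.of_nat (S (Z.to_nat (k' - 1)))) with k' by lia. }
  specialize (Hmin _ Qk'). lia.
Qed.

Definition lattice_basis (L : C -> Prop) (w1 w2 : C) : Prop :=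
  forall z, L z <-> exists a b : Z, z = Cplus (Cmult (zc a) w1) (Cmult (zc b) w2).

Definition area (z w : C) : R := Im (Cmult w (Cconj z)).

Lemma area_comb (a b c d : R) (w1 w2 : C) :
  area (Cplus (Cmult (RtoC a) w1) (Cmult (RtoC b) w2)) (Cplus (Cmult (RtoC c) w1) (Cmult (RtoC d) w2))
  = ((a * d - b * c) * area w1 w2)%R.
Proof. destruct w1, w2. unfold area, Cmult, Cplus, Cconj, RtoC, Im; simpl. ring. Qed.

Lemma area_scale (u z w : C) :
  area (Cmult u z) (Cmult u w) = ((Re u * Re u + Im u * Im u) * area z w)%R.
Proof. destruct u, z, w. unfold area, Cmult, Cconj, Re, Im; simpl. ring. Qed.

Lemma real_coords_unique (w1 w2 : C) (r1 r2 s1 s2 : R) : area w1 w2 <> 0%R ->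
  Cplus (Cmult (RtoC r1) w1) (Cmult (RtoC r2) w2) = Cplus (Cmult (RtoC s1) w1) (Cmult (RtoC s2) w2) ->
  r1 = s1 /\ r2 = s2.
Proof.
  intros HD E.
  assert (E1 := f_equal (fun z => area z (Cplus (Cmult (RtoC 0) w1) (Cmult (RtoC 1) w2))) E).
  assert (E2 := f_equal (area (Cplus (Cmult (RtoC 1) w1) (Cmult (RtoC 0) w2))) E).
  simpl in E1, E2. rewrite !area_comb in E1, E2.
  split; apply (Rmult_eq_reg_r (area w1 w2)); lra.
Qed.

Lemma int_coords_unique (w1 w2 : C) (a b c d : Z) : area w1 w2 <> 0%R ->
  Cplus (Cmult (zc a) w1) (Cmult (zc b) w2) = Cplus (Cmult (zc c) w1) (Cmult (zc d) w2) ->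
  a = c /\ b = d.
Proof. intros HD E. destruct (real_coords_unique w1 w2 _ _ _ _ HD E). split; now apply eq_IZR. Qed.

Section Lattice.

Variables (L : C -> Prop) (w1 w2 : C).
Hypothesis basis : lattice_basis L w1 w2.

Lemma lattice_comb a b : L (Cplus (Cmult (zc a) w1) (Cmult (zc b) w2)).
Proof. apply basis. eauto. Qed.

Lemma lattice_0 : L (RtoC 0).
Proof. apply basis. exists 0%Z, 0%Z. rewrite zc_0. ring. Qed.

Lemma lattice_w1 : L w1.
Proof. apply basis. exists 1%Z, 0%Z. rewrite zc_0, zc_1. ring. Qed.

Lemma lattice_w2 : L w2.
Proof. apply basis. exists 0%Z, 1%Z. rewrite zc_0, zc_1. ring. Qed.

Lemma lattice_add z w : L z -> L w -> L (Cplus z w).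
Proof.
  intros [a [b ->]]%basis [c [d ->]]%basis. apply basis.
  exists (a + c)%Z, (b + d)%Z. zc_push. ring.
Qed.

Lemma lattice_zmul k z : L z -> L (Cmult (zc k) z).
Proof.
  intros [a [b ->]]%basis. apply basis.
  exists (k * a)%Z, (k * b)%Z. zc_push. ring.
Qed.

Lemma lattice_sub z w : L z -> L w -> L (Cminus z w).
Proof.
  intros Hz Hw. replace (Cminus z w) with (Cplus z (Cmult (zc (- (1))) w)) by (rewrite zc_opp, zc_1; ring).
  now apply lattice_add, lattice_zmul.
Qed.

Lemma area_lattice z w : L z -> L w -> exists k : Z, area z w = (IZR k * area w1 w2)%R.
Proof.
  intros [a [b ->]]%basis [c [d ->]]%basis. exists (a * d - b * c)%Z.
  unfold zc. rewrite area_comb, minus_IZR, !mult_IZR. reflexivity.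
Qed.

Lemma congr_refl z : congr L z z.
Proof. unfold congr. replace (Cminus z z) with (RtoC 0) by ring. exact lattice_0. Qed.

Lemma congr_of_eq z w : z = w -> congr L z w.
Proof. intros ->. apply congr_refl. Qed.

Lemma congr_sym z w : congr L z w -> congr L w z.
Proof.
  unfold congr. intros H. replace (Cminus w z) with (Cminus (RtoC 0) (Cminus z w)) by ring.
  apply lattice_sub; [apply lattice_0 | exact H].
Qed.

Lemma congr_trans x y z : congr L x y -> congr L y z -> congr L x z.
Proof.
  unfold congr. intros H1 H2. replace (Cminus x z) with (Cplus (Cminus x y) (Cminus y z)) by ring.
  now apply lattice_add.
Qed.

Lemma congr_add x y x' y' : congr L x x' -> congr L y y' -> congr L (Cplus x y) (Cplus x' y').
Proof.
  unfold congr. intros H1 H2.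
  replace (Cminus (Cplus x y) (Cplus x' y')) with (Cplus (Cminus x x') (Cminus y y')) by ring.
  now apply lattice_add.
Qed.

Lemma congr_End a x y : End_lat L a -> congr L x y -> congr L (Cmult a x) (Cmult a y).
Proof.
  unfold congr. intros Ha H.
  replace (Cminus (Cmult a x) (Cmult a y)) with (Cmult a (Cminus x y)) by ring.
  now apply Ha.
Qed.

Lemma End_zc k : End_lat L (zc k).
Proof. intros z. apply lattice_zmul. Qed.

Lemma End_add a b : End_lat L a -> End_lat L b -> End_lat L (Cplus a b).
Proof.
  intros Ha Hb z Hz. replace (Cmult (Cplus a b) z) with (Cplus (Cmult a z) (Cmult b z)) by ring.
  now apply lattice_add; [apply Ha | apply Hb].
Qed.

Lemma End_sub a b : End_lat L a -> End_lat L b -> End_lat L (Cminus a b).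
Proof.
  intros Ha Hb z Hz. replace (Cmult (Cminus a b) z) with (Cminus (Cmult a z) (Cmult b z)) by ring.
  now apply lattice_sub; [apply Ha | apply Hb].
Qed.

Lemma End_mul a b : End_lat L a -> End_lat L b -> End_lat L (Cmult a b).
Proof.
  intros Ha Hb z Hz. replace (Cmult (Cmult a b) z) with (Cmult a (Cmult b z)) by ring.
  now apply Ha, Hb.
Qed.

Lemma End_of_basis a : L (Cmult a w1) -> L (Cmult a w2) -> End_lat L a.
Proof.
  intros H1 H2 z [c [d ->]]%basis.
  replace (Cmult a (Cplus (Cmult (zc c) w1) (Cmult (zc d) w2)))
    with (Cplus (Cmult (zc c) (Cmult a w1)) (Cmult (zc d) (Cmult a w2))) by ring.
  now apply lattice_add; apply lattice_zmul.
Qed.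

Lemma Ntors_of_lattice N z : L z -> Ntors L N z.
Proof. apply lattice_zmul. Qed.

Lemma Ntors_add N z w : Ntors L N z -> Ntors L N w -> Ntors L N (Cplus z w).
Proof.
  unfold Ntors. intros H1 H2.
  replace (Cmult (zc N) (Cplus z w)) with (Cplus (Cmult (zc N) z) (Cmult (zc N) w)) by ring.
  now apply lattice_add.
Qed.

Lemma Ntors_End N a z : End_lat L a -> Ntors L N z -> Ntors L N (Cmult a z).
Proof.
  unfold Ntors. intros Ha H.
  replace (Cmult (zc N) (Cmult a z)) with (Cmult a (Cmult (zc N) z)) by ring.
  now apply Ha.
Qed.

Lemma Ntors_zmul N k z : Ntors L N z -> Ntors L N (Cmult (zc k) z).
Proof. apply Ntors_End, End_zc. Qed.

End Lattice.

Section EndN_linear.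

Variables (L : C -> Prop) (w1 w2 : C) (N : Z) (phi : C -> C).
Hypothesis basis : lattice_basis L w1 w2.
Hypothesis Hphi : EndN L N phi.

Lemma EndN_0 : congr L (phi (RtoC 0)) (RtoC 0).
Proof.
  destruct Hphi as [_ [Hwd Hadd]].
  assert (T0 : Ntors L N (RtoC 0)) by apply (Ntors_of_lattice L w1 w2 basis), (lattice_0 L w1 w2 basis).
  assert (H00 : congr L (phi (Cplus (RtoC 0) (RtoC 0))) (phi (RtoC 0))).
  { apply Hwd; [now apply (Ntors_add L w1 w2 basis) | exact T0 |].
    apply (congr_of_eq L w1 w2 basis). ring. }
  assert (H := congr_trans L w1 w2 basis _ _ _ (congr_sym L w1 w2 basis _ _ (Hadd _ _ T0 T0)) H00).
  unfold congr in *. now replace (Cminus (phi (RtoC 0)) (RtoC 0))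
    with (Cminus (Cplus (phi (RtoC 0)) (phi (RtoC 0))) (phi (RtoC 0))) by ring.
Qed.

(* Induction over Z in both directions: the step k -> k + 1 is reversible modulo L. *)
Lemma EndN_zmul k z : Ntors L N z -> congr L (phi (Cmult (zc k) z)) (Cmult (zc k) (phi z)).
Proof.
  intros Hz. destruct Hphi as [_ [_ Hadd]].
  assert (Hstep : forall j, congr L (phi (Cmult (zc (j + 1)) z))
                                    (Cplus (phi (Cmult (zc j) z)) (phi z))).
  { intros j. rewrite zc_add, zc_1.
    replace (Cmult (Cplus (zc j) (RtoC 1)) z) with (Cplus (Cmult (zc j) z) z) by ring.
    apply Hadd; auto. now apply (Ntors_zmul L w1 w2 basis). }
  induction k as [| k IH | k IH] using Z.peano_ind; unfold congr in *.
  - rewrite zc_0. replace (Cmult (RtoC 0) z) with (RtoC 0) by ring.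
    replace (Cminus (phi (RtoC 0)) (Cmult (RtoC 0) (phi z))) with (Cminus (phi (RtoC 0)) (RtoC 0)) by ring.
    exact EndN_0.
  - rewrite <- Z.add_1_r. specialize (Hstep k).
    replace (Cminus (phi (Cmult (zc (k + 1)) z)) (Cmult (zc (k + 1)) (phi z)))
      with (Cplus (Cminus (phi (Cmult (zc (k + 1)) z)) (Cplus (phi (Cmult (zc k) z)) (phi z)))
                  (Cminus (phi (Cmult (zc k) z)) (Cmult (zc k) (phi z))))
      by (rewrite zc_add, zc_1; ring).
    now apply (lattice_add L w1 w2 basis).
  - remember (Z.pred k) as j. replace k with (j + 1)%Z in IH by lia. specialize (Hstep j).
    replace (Cminus (phi (Cmult (zc j) z)) (Cmult (zc j) (phi z)))
      with (Cminus (Cminus (phi (Cmult (zc (j + 1)) z)) (Cmult (zc (j + 1)) (phi z)))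
                   (Cminus (phi (Cmult (zc (j + 1)) z)) (Cplus (phi (Cmult (zc j) z)) (phi z))))
      by (rewrite zc_add, zc_1; ring).
    now apply (lattice_sub L w1 w2 basis).
Qed.

Lemma EndN_comb p q z1 z2 : Ntors L N z1 -> Ntors L N z2 ->
  congr L (phi (Cplus (Cmult (zc p) z1) (Cmult (zc q) z2)))
          (Cplus (Cmult (zc p) (phi z1)) (Cmult (zc q) (phi z2))).
Proof.
  intros H1 H2. destruct Hphi as [_ [_ Hadd]].
  apply (congr_trans L w1 w2 basis) with (Cplus (phi (Cmult (zc p) z1)) (phi (Cmult (zc q) z2))).
  - apply Hadd; now apply (Ntors_zmul L w1 w2 basis).
  - apply (congr_add L w1 w2 basis); now apply EndN_zmul.
Qed.

End EndN_linear.

Lemma real_of_Im0 (x : C) : Im x = 0%R -> x = RtoC (Re x).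
Proof. destruct x. unfold Im, Re, RtoC; simpl. now intros ->. Qed.

Lemma area_add_zmul (m k1 k2 : Z) (l1 l2 g : C) :
  (IZR m * area (Cplus l1 (Cmult (zc k1) g)) (Cplus l2 (Cmult (zc k2) g)))%R =
  (IZR m * area l1 l2 + IZR k2 * area l1 (Cmult (zc m) g) + IZR k1 * area (Cmult (zc m) g) l2)%R.
Proof. destruct l1, l2, g. unfold area, zc, Cmult, Cplus, Cconj, RtoC, Im; simpl. ring. Qed.

Section Cyclic_isogeny.

Variables (L L' : C -> Prop) (w1 w2 : C) (m : Z) (u : C).
Hypothesis HD : area w1 w2 <> 0%R.
Hypothesis basis : lattice_basis L w1 w2.
Hypothesis Hcyc : cyclic_over L L' m.
Hypothesis Hu0 : u <> RtoC 0.
Hypothesis Hiso : forall z, L' z <-> L (Cmult u z).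

(* [m L'] lies in [L], so [m covol(L') = K covol(L)] for an integer [K]; and [u L' = L] gives
   [covol(L) = |u|^2 covol(L')].  Hence [m = K |u|^2]. *)
Lemma cyclic_iso_norm_le : (0 < m)%Z -> (Re u * Re u + Im u * Im u <= IZR m)%R.
Proof.
  intros Hm. destruct Hcyc as [_ [g [HL' Hg]]].
  assert (Hmg : L (Cmult (zc m) g)) by now apply Hg.
  assert (Hwu : forall w, L w -> exists k l, L l /\ Cmult w (Cinv u) = Cplus l (Cmult (zc k) g)).
  { intros w Hw. apply HL', Hiso. now replace (Cmult u (Cmult w (Cinv u))) with w by (field; exact Hu0). }
  destruct (Hwu w1 (lattice_w1 L w1 w2 basis)) as [k1 [l1 [Hl1 E1]]].
  destruct (Hwu w2 (lattice_w2 L w1 w2 basis)) as [k2 [l2 [Hl2 E2]]].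
  set (A := area (Cmult w1 (Cinv u)) (Cmult w2 (Cinv u))).
  set (s := (Re u * Re u + Im u * Im u)%R).
  assert (HDA : area w1 w2 = (s * A)%R).
  { unfold A, s. rewrite <- area_scale. f_equal; field; exact Hu0. }
  assert (HmA : exists K : Z, (IZR m * A = IZR K * area w1 w2)%R).
  { destruct (area_lattice L w1 w2 basis l1 l2) as [c1 Ec1]; auto.
    destruct (area_lattice L w1 w2 basis l1 (Cmult (zc m) g)) as [c2 Ec2]; auto.
    destruct (area_lattice L w1 w2 basis (Cmult (zc m) g) l2) as [c3 Ec3]; auto.
    exists (m * c1 + k2 * c2 + k1 * c3)%Z. unfold A. rewrite E1, E2, area_add_zmul, Ec1, Ec2, Ec3.
    rewrite plus_IZR, plus_IZR, !mult_IZR. ring. }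
  destruct HmA as [K HK]. rewrite HDA in HK, HD.
  assert (Hs : (0 <= s)%R) by (unfold s; nra).
  assert (HA : A <> 0%R) by (intros E; apply HD; rewrite E; ring).
  assert (HmK : IZR m = (IZR K * s)%R) by (apply (Rmult_eq_reg_r A); [lra | exact HA]).
  assert (Hm' : (0 < IZR m)%R) by now apply IZR_lt.
  assert (HK0 : (0 < K)%Z) by (apply lt_IZR; nra).
  assert (HK1 : (1 <= IZR K)%R) by (apply IZR_le; lia).
  nra.
Qed.

(* A real [u] is an integer [a]; then [a g] lies in [L], so [m | a], while [a^2 <= m]. *)
Lemma cyclic_iso_nonreal : (1 < m)%Z -> Im u <> 0%R.
Proof.
  intros Hm Hi. destruct Hcyc as [HLL' [g [HL' Hg]]].
  assert (Hw1 : L (Cmult u w1)) by (apply Hiso, HLL', (lattice_w1 L w1 w2 basis)).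
  destruct (proj1 (basis _) Hw1) as [a [b Eab]].
  assert (Eu : u = zc a).
  { rewrite (real_of_Im0 u Hi) in Eab |- *.
    assert (E : Cplus (Cmult (RtoC (Re u)) w1) (Cmult (RtoC 0) w2) =
                Cplus (Cmult (RtoC (IZR a)) w1) (Cmult (RtoC (IZR b)) w2))
      by (unfold zc in Eab; rewrite <- Eab; ring).
    now destruct (real_coords_unique _ _ _ _ _ _ HD E) as [-> _]. }
  assert (Hag : (m | a)%Z).
  { apply Hg. rewrite <- Eu. apply Hiso, HL'. exists 1%Z, (RtoC 0).
    split; [apply (lattice_0 L w1 w2 basis) | rewrite zc_1; ring]. }
  assert (Ha0 : a <> 0%Z) by (intros ->; now apply Hu0).
  assert (Hnorm := cyclic_iso_norm_le ltac:(lia)).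
  rewrite Eu in Hnorm. unfold zc, Re, Im, RtoC in Hnorm; simpl in Hnorm.
  rewrite Rmult_0_l, Rplus_0_r, <- mult_IZR in Hnorm. apply le_IZR in Hnorm.
  destruct Hag as [c ->]. assert (1 <= c * c)%Z by nia. nia.
Qed.

End Cyclic_isogeny.

Lemma support_diag_Hecke_endo L w1 w2 N m phi :
  area w1 w2 <> 0%R -> lattice_basis L w1 w2 -> (1 < m)%Z ->
  in_support_diag_Hecke L N m phi ->
  exists u, End_lat L u /\ Im u <> 0%R /\ (Re u * Re u + Im u * Im u <= IZR m)%R /\
    forall z, Ntors L N z -> congr L (Cmult u (phi z)) (phi (Cmult u z)).
Proof.
  intros HD basis Hm [L' [phi' [_ [Hcyc [_ [Hphi' [u [Hu0 [Hiso Hcomm]]]]]]]]].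
  assert (HLL' := proj1 Hcyc).
  exists u. split; [| split; [| split]].
  - intros z Hz. now apply Hiso, HLL'.
  - now apply (cyclic_iso_nonreal L L' w1 w2 m u).
  - apply (cyclic_iso_norm_le L L' w1 w2 m u); auto. lia.
  - intros z Hz. apply (congr_trans L w1 w2 basis) with (Cmult u (phi' z)).
    + apply (congr_sym L w1 w2 basis). unfold congr.
      replace (Cminus (Cmult u (phi' z)) (Cmult u (phi z))) with (Cmult u (Cminus (phi' z) (phi z))) by ring.
      now apply Hiso, Hphi'.
    + apply Hcomm. unfold Ntors in *. now apply HLL'.
Qed.

Lemma quadratic_Im_sq (tau : C) (t n : Z) : Im tau <> 0%R ->
  Cmult tau tau = Cminus (Cmult (zc t) tau) (zc n) ->
  IZR (4 * n - t * t) = (4 * Im tau * Im tau)%R.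
Proof.
  rewrite minus_IZR, !mult_IZR. destruct tau as [x y].
  unfold Im, Cmult, Cminus, Cplus, Copp, zc, RtoC; simpl. intros Hy E. injection E as E1 E2.
  assert (Ex : (2 * x = IZR t)%R).
  { apply (Rmult_eq_reg_l y); [lra | exact Hy]. }
  rewrite <- Ex in E1 |- *. nra.
Qed.

Lemma order_Im_sq_le (O : C -> Prop) (tau v : C) :
  (forall z, O z <-> exists a b : Z, z = Cplus (zc a) (Cmult (zc b) tau)) ->
  O v -> Im v <> 0%R -> (Im tau * Im tau <= Im v * Im v)%R.
Proof.
  intros HO Hv Hiv. destruct (proj1 (HO v) Hv) as [a [b ->]]. rewrite Im_zc_comb in *.
  assert (b <> 0%Z) by (intros ->; apply Hiv; ring).
  assert (1 <= IZR b * IZR b)%R by (rewrite <- mult_IZR; apply IZR_le; nia).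
  nra.
Qed.

Section Endomorphism_ring.

Variables (L : C -> Prop) (w1 w2 : C).
Hypothesis HD : area w1 w2 <> 0%R.
Hypothesis basis : lattice_basis L w1 w2.

(* Among the endomorphisms, [tau] minimises the positive [w2]-coordinate of [tau * w1];
   division with remainder on that coordinate shows that [1, tau] is a Z-basis. *)
Lemma End_lat_monogenic u : End_lat L u -> Im u <> 0%R ->
  exists tau t n, Im tau <> 0%R /\ Cmult tau tau = Cminus (Cmult (zc t) tau) (zc n) /\
    forall z, End_lat L z <-> exists a b : Z, z = Cplus (zc a) (Cmult (zc b) tau).
Proof.
  intros Hu Hiu.
  assert (Hw1 : w1 <> RtoC 0) by (intros E; apply HD; rewrite E; unfold area; destruct w2; simpl; ring).
  assert (Hint : forall v a, Cmult v w1 = Cplus (Cmult (zc a) w1) (Cmult (zc 0) w2) -> v = zc a).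
  { intros v a E. replace v with (Cmult (Cmult v w1) (Cinv w1)) by (field; exact Hw1).
    rewrite E, zc_0. field. exact Hw1. }
  set (P k := exists v a, End_lat L v /\ Cmult v w1 = Cplus (Cmult (zc a) w1) (Cmult (zc k) w2)).
  assert (Pex : exists k, (0 < k)%Z /\ P k).
  { destruct (proj1 (basis _) (Hu w1 (lattice_w1 L w1 w2 basis))) as [a [b Eb]].
    assert (Hb : b <> 0%Z) by (intros ->; apply Hiu; rewrite (Hint u a Eb); reflexivity).
    exists (Z.abs b). split; [lia |]. exists (Cmult (zc (Z.sgn b)) u), (Z.sgn b * a)%Z. split.
    - apply (End_mul L); [apply (End_zc L w1 w2 basis) | exact Hu].
    - replace (Cmult (Cmult (zc (Z.sgn b)) u) w1) with (Cmult (zc (Z.sgn b)) (Cmult u w1)) by ring.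
      rewrite Eb, <- Z.sgn_abs. zc_push. ring. }
  destruct (Z_least_pos P Pex) as [k0 [Hk0 [[tau [a0 [Htau Etau]]] Hmin]]].
  assert (Hchar : forall z, End_lat L z <-> exists a b : Z, z = Cplus (zc a) (Cmult (zc b) tau)).
  { intros z. split.
    - intros Hz. destruct (proj1 (basis _) (Hz w1 (lattice_w1 L w1 w2 basis))) as [a [k Ek]].
      set (q := (k / k0)%Z). set (r := (k mod k0)%Z).
      assert (Hr : (0 <= r < k0)%Z) by (apply Z.mod_pos_bound; lia).
      assert (Ev : Cmult (Cminus z (Cmult (zc q) tau)) w1 =
                   Cplus (Cmult (zc (a - q * a0)) w1) (Cmult (zc r) w2)).
      { replace (Cmult (Cminus z (Cmult (zc q) tau)) w1)
          with (Cminus (Cmult z w1) (Cmult (zc q) (Cmult tau w1))) by ring.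
        rewrite Ek, Etau. replace r with (k - k0 * q)%Z by (unfold r, q; rewrite Z.mod_eq; lia).
        zc_push. ring. }
      assert (Hv : End_lat L (Cminus z (Cmult (zc q) tau))).
      { apply (End_sub L w1 w2 basis); [exact Hz |].
        apply (End_mul L); [apply (End_zc L w1 w2 basis) | exact Htau]. }
      assert (Hr0 : r = 0%Z).
      { destruct (Z.eq_dec r 0) as [|Hr0]; [assumption |].
        assert (k0 <= r)%Z by (apply Hmin; [lia | exists (Cminus z (Cmult (zc q) tau)), (a - q * a0)%Z; auto]).
        lia. }
      rewrite Hr0 in Ev. exists (a - q * a0)%Z, q. rewrite <- (Hint _ _ Ev). ring.
    - intros [a [b ->]]. apply (End_add L w1 w2 basis); [apply (End_zc L w1 w2 basis) |].
      apply (End_mul L); [apply (End_zc L w1 w2 basis) | exact Htau]. }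
  assert (Hitau : Im tau <> 0%R).
  { intros Hi. rewrite (real_of_Im0 _ Hi) in Etau.
    assert (E : Cplus (Cmult (RtoC (Re tau)) w1) (Cmult (RtoC 0) w2) =
                Cplus (Cmult (RtoC (IZR a0)) w1) (Cmult (RtoC (IZR k0)) w2))
      by (unfold zc in Etau; rewrite <- Etau; ring).
    destruct (real_coords_unique _ _ _ _ _ _ HD E) as [_ Ek0].
    apply eq_IZR in Ek0. lia. }
  destruct (proj1 (Hchar (Cmult tau tau)) (End_mul L tau tau Htau Htau)) as [a [b Eab]].
  exists tau, b, (- a)%Z. split; [exact Hitau | split; [| exact Hchar]].
  rewrite Eab. zc_push. ring.
Qed.

End Endomorphism_ring.

Lemma not_squarefree_factor k : k <> 0%Z -> ~ squarefreeZ k ->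
  exists q k', (2 <= q)%Z /\ k = (q * q * k')%Z.
Proof.
  intros Hk Hn. apply not_all_ex_not in Hn as [p Hp].
  apply imply_to_and in Hp as [[k' Ek] Hp].
  assert (p <> 0)%Z by (intros ->; lia).
  exists (Z.abs p), k'. split; [lia |]. rewrite Ek. nia.
Qed.

Lemma square_factor_mod4 k q k' : (k mod 4 <> 0)%Z -> k = (q * q * k')%Z -> (k' mod 4 = k mod 4)%Z.
Proof.
  intros Hk ->. destruct (Z.Even_or_Odd q) as [[r ->] | [r ->]].
  - exfalso. apply Hk. replace (2 * r * (2 * r) * k')%Z with (r * r * k' * 4)%Z by ring.
    apply Z_mod_mult.
  - replace ((2 * r + 1) * (2 * r + 1) * k')%Z with (k' + (r * r + r) * k' * 4)%Z by ring.
    now rewrite Z_mod_plus_full.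
Qed.

Lemma disc_square_factor D : D <> 0%Z -> (D mod 4 = 0 \/ D mod 4 = 1)%Z -> ~ fundamental_disc D ->
  exists q D', (2 <= q)%Z /\ D = (q * q * D')%Z /\ (D' mod 4 = 0 \/ D' mod 4 = 1)%Z.
Proof.
  intros HD [H0 | H1] Hnf.
  - assert (ED : D = (4 * (D / 4))%Z) by (rewrite (Z.div_mod D 4) at 1 by lia; lia).
    set (k := (D / 4)%Z) in ED.
    assert (Hk : (0 <= k mod 4 < 4)%Z) by (apply Z.mod_pos_bound; lia).
    destruct (classic (k mod 4 = 2 \/ k mod 4 = 3)%Z) as [Hk23 | Hk01].
    + assert (Hsf : ~ squarefreeZ k) by (intros Hsf; apply Hnf; right; exists k; auto).
      destruct (not_squarefree_factor k ltac:(lia) Hsf) as [q [k' [Hq Ek]]].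
      assert (Hk' := square_factor_mod4 k q k' ltac:(lia) Ek).
      exists q, (4 * k')%Z. split; [exact Hq | split; [rewrite ED, Ek; ring |]].
      left. rewrite Z.mul_comm. apply Z_mod_mult.
    + exists 2%Z, k. split; [lia | split; [rewrite ED; ring | lia]].
  - assert (Hsf : ~ squarefreeZ D) by (intros Hsf; apply Hnf; left; auto).
    destruct (not_squarefree_factor D HD Hsf) as [q [D' [Hq ED]]].
    exists q, D'. split; [exact Hq | split; [exact ED |]].
    right. rewrite (square_factor_mod4 D q D'); lia.
Qed.

Lemma disc_conductor_decomp D : D <> 0%Z -> (D mod 4 = 0 \/ D mod 4 = 1)%Z ->
  exists f d, (0 < f)%Z /\ D = (f * f * d)%Z /\ fundamental_disc d.
Proof.
  remember (Z.abs D) as x eqn:Hx. revert D Hx.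
  induction x as [x IH] using (well_founded_induction (Zwf_well_founded 0)).
  intros D -> HD Hmod. destruct (classic (fundamental_disc D)) as [Hf | Hnf].
  - exists 1%Z, D. split; [lia | split; [ring | exact Hf]].
  - destruct (disc_square_factor D HD Hmod Hnf) as [q [D' [Hq [ED Hmod']]]].
    assert (HD' : D' <> 0%Z) by (intros ->; lia).
    destruct (IH (Z.abs D')) with D' as [f [d [Hf [Ed Hd]]]]; auto.
    { unfold Zwf. rewrite ED, !Z.abs_mul.
      assert (4 <= Z.abs q * Z.abs q)%Z by nia. assert (0 < Z.abs D')%Z by lia. split; nia. }
    exists (q * f)%Z, d. split; [nia | split; [rewrite ED, Ed; ring | exact Hd]].
Qed.

Lemma order_conductor_coprime (O : C -> Prop) (tau : C) (t n N : Z) :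
  prime N -> Im tau <> 0%R -> Cmult tau tau = Cminus (Cmult (zc t) tau) (zc n) ->
  (forall z, O z <-> exists a b : Z, z = Cplus (zc a) (Cmult (zc b) tau)) ->
  (4 * n - t * t < N * N)%Z ->
  exists f, Z.gcd f N = 1%Z /\ imag_quad_order_of_conductor O f.
Proof.
  intros HN Hitau Etau HO Hbound.
  assert (Hpos : (0 < 4 * n - t * t)%Z).
  { apply lt_IZR. rewrite (quadratic_Im_sq tau t n Hitau Etau).
    assert (0 < Im tau * Im tau)%R by (apply Rsqr_pos_lt; exact Hitau). lra. }
  assert (Hmod : ((t * t - 4 * n) mod 4 = 0 \/ (t * t - 4 * n) mod 4 = 1)%Z).
  { destruct (Z.Even_or_Odd t) as [[r ->] | [r ->]]; [left | right].
    - replace (2 * r * (2 * r) - 4 * n)%Z with ((r * r - n) * 4)%Z by ring. apply Z_mod_mult.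
    - replace ((2 * r + 1) * (2 * r + 1) - 4 * n)%Z with (1 + (r * r + r - n) * 4)%Z by ring.
      now rewrite Z_mod_plus_full. }
  destruct (disc_conductor_decomp (t * t - 4 * n) ltac:(lia) Hmod) as [f [d [Hf [Ed Hd]]]].
  exists f. split.
  - apply Zgcd_1_rel_prime, rel_prime_sym, prime_rel_prime; [exact HN |].
    intros [f' ->]. assert (d < 0)%Z by nia. assert (1 <= f' * f')%Z by nia. nia.
  - split; [exact Hf |]. exists tau, t, n, d. auto.
Qed.

Lemma commutant_mod_prime (N pa pb pc pd ux uy uz uw : Z) : prime N -> ~ (N | uy)%Z ->
  (N | pc * uy - uz * pb)%Z -> (N | pb * (ux - uw) + uy * (pd - pa))%Z ->
  exists mu lam, (N | pa - mu - lam * ux)%Z /\ (N | pb - lam * uy)%Z /\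
                 (N | pc - lam * uz)%Z /\ (N | pd - mu - lam * uw)%Z.
Proof.
  intros HN Huy [k1 K1] [k2 K2].
  destruct (rel_prime_bezout _ _ (prime_rel_prime N HN uy Huy)) as [a v Bez].
  (* [v] inverts [uy] modulo [N] *)
  exists (pa - pb * v * ux)%Z, (pb * v)%Z. repeat split.
  - exists 0%Z. ring.
  - exists (pb * a)%Z. rewrite <- (Z.mul_1_r pb) at 1. rewrite <- Bez. ring.
  - exists (pc * a + v * k1)%Z. rewrite <- (Z.mul_1_r pc) at 1. rewrite <- Bez.
    transitivity (pc * a * N + v * (pc * uy - uz * pb))%Z; [ring | rewrite K1; ring].
  - exists ((pd - pa) * a + v * k2)%Z.
    transitivity ((pd - pa) * (a * N + v * uy) + v * (pb * (ux - uw)))%Z; [rewrite Bez; ring |].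
    transitivity ((pd - pa) * a * N + v * (pb * (ux - uw) + uy * (pd - pa)))%Z; [ring | rewrite K2; ring].
Qed.

Lemma commuting_scalar_mod_prime (N eps pa pb pc pd ux uy uz uw : Z) :
  prime N -> nonsquare_mod eps N -> (N | pa * pa + pc * pb - eps)%Z ->
  (N | pc * uy - uz * pb)%Z -> (N | pb * (ux - uw) + uy * (pd - pa))%Z ->
  (N | uy)%Z -> (N | uz)%Z /\ (N | ux - uw)%Z.
Proof.
  intros HN Heps [k3 K3] K1 K2 [s ->].
  assert (Hpb : ~ (N | pb)%Z).
  { intros [s' ->]. apply Heps. exists pa. apply Z.mod_divide; [destruct HN; lia |].
    exists (k3 - pc * s')%Z. lia. }
  split.
  - destruct (prime_mult N HN uz pb) as [H | H]; [| exact H | contradiction].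
    replace (uz * pb)%Z with (pc * (s * N) - (pc * (s * N) - uz * pb))%Z by ring.
    apply Z.divide_sub_r; [apply Z.divide_mul_r, Z.divide_mul_r, Z.divide_refl | exact K1].
  - destruct (prime_mult N HN pb (ux - uw)) as [H | H]; [| contradiction | exact H].
    replace (pb * (ux - uw))%Z with (pb * (ux - uw) + s * N * (pd - pa) - s * N * (pd - pa))%Z by ring.
    apply Z.divide_sub_r; [exact K2 |].
    apply Z.divide_mul_l, Z.divide_mul_r, Z.divide_refl.
Qed.

Section Torsion_coordinates.

Variables (L : C -> Prop) (w1 w2 : C) (N : Z).
Hypothesis HD : area w1 w2 <> 0%R.
Hypothesis basis : lattice_basis L w1 w2.
Hypothesis HN : N <> 0%Z.

(* [tcomb p q] is the point [p e1 + q e2] of [E[N]], where [e_i = w_i / N]. *)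
Let tcomb (p q : Z) : C :=
  Cplus (Cmult (zc p) (Cmult w1 (Cinv (zc N)))) (Cmult (zc q) (Cmult w2 (Cinv (zc N)))).

Let HNz : zc N <> RtoC 0 := zc_neq0 N HN.

Lemma lattice_tcomb p q : L (tcomb p q) <-> (N | p)%Z /\ (N | q)%Z.
Proof.
  split.
  - intros [a [b E]]%basis.
    assert (E' : Cplus (Cmult (zc p) w1) (Cmult (zc q) w2) =
                 Cplus (Cmult (zc (a * N)) w1) (Cmult (zc (b * N)) w2)).
    { transitivity (Cmult (zc N) (tcomb p q)); [unfold tcomb; field; exact HNz |].
      rewrite E. zc_push. ring. }
    destruct (int_coords_unique _ _ _ _ _ _ HD E') as [-> ->].
    split; apply Z.divide_factor_r.
  - intros [[a ->] [b ->]]. apply basis. exists a, b. unfold tcomb. zc_push. field. exact HNz.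
Qed.

Lemma congr_tcomb p q p' q' :
  congr L (tcomb p q) (tcomb p' q') <-> (N | p - p')%Z /\ (N | q - q')%Z.
Proof.
  unfold congr. rewrite <- lattice_tcomb.
  replace (Cminus (tcomb p q) (tcomb p' q')) with (tcomb (p - p') (q - q')); [reflexivity |].
  unfold tcomb. zc_push. ring.
Qed.

Lemma Ntors_tcomb p q : Ntors L N (tcomb p q).
Proof.
  unfold Ntors. replace (Cmult (zc N) (tcomb p q)) with (Cplus (Cmult (zc p) w1) (Cmult (zc q) w2)).
  - apply (lattice_comb L w1 w2 basis).
  - unfold tcomb. field. exact HNz.
Qed.

Lemma Ntors_tcomb_inv z : Ntors L N z -> exists p q, z = tcomb p q.
Proof.
  intros [p [q E]]%basis. exists p, q.
  transitivity (Cmult (Cmult (zc N) z) (Cinv (zc N))); [field; exact HNz |].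
  rewrite E. unfold tcomb. field. exact HNz.
Qed.

Lemma End_tcomb u : End_lat L u ->
  exists ux uy uz uw, forall p q, Cmult u (tcomb p q) = tcomb (p * ux + q * uy) (p * uz + q * uw).
Proof.
  intros Hu.
  destruct (proj1 (basis _) (Hu w1 (lattice_w1 L w1 w2 basis))) as [ux [uz E1]].
  destruct (proj1 (basis _) (Hu w2 (lattice_w2 L w1 w2 basis))) as [uy [uw E2]].
  exists ux, uy, uz, uw. intros p q.
  transitivity (Cmult (Cplus (Cmult (zc p) (Cmult u w1)) (Cmult (zc q) (Cmult u w2))) (Cinv (zc N)));
    [unfold tcomb; field; exact HNz |].
  rewrite E1, E2. unfold tcomb. zc_push. field. exact HNz.
Qed.

Lemma EndN_tcomb phi : EndN L N phi ->
  exists pa pb pc pd, forall p q,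
    congr L (phi (tcomb p q)) (tcomb (p * pa + q * pb) (p * pc + q * pd)).
Proof.
  intros Hphi. assert (Hmaps := proj1 Hphi).
  destruct (Ntors_tcomb_inv _ (Hmaps _ (Ntors_tcomb 1 0))) as [pa [pc E1]].
  destruct (Ntors_tcomb_inv _ (Hmaps _ (Ntors_tcomb 0 1))) as [pb [pd E2]].
  exists pa, pb, pc, pd. intros p q.
  replace (tcomb p q) with (Cplus (Cmult (zc p) (tcomb 1 0)) (Cmult (zc q) (tcomb 0 1)))
    by (unfold tcomb; rewrite zc_0, zc_1; ring).
  apply (congr_trans L w1 w2 basis) with (Cplus (Cmult (zc p) (phi (tcomb 1 0))) (Cmult (zc q) (phi (tcomb 0 1)))).
  - apply (EndN_comb L w1 w2 N phi); auto using Ntors_tcomb.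
  - apply (congr_of_eq L w1 w2 basis). rewrite E1, E2. unfold tcomb. zc_push. ring.
Qed.

Lemma scalar_mod_N u ux uy uz uw :
  (forall p q, Cmult u (tcomb p q) = tcomb (p * ux + q * uy) (p * uz + q * uw)) ->
  (N | uy)%Z -> (N | uz)%Z -> (N | ux - uw)%Z ->
  exists v, End_lat L v /\ u = Cplus (zc ux) (Cmult (zc N) v).
Proof.
  intros HU Huy Huz Hxw.
  set (v := Cmult (Cminus u (zc ux)) (Cinv (zc N))).
  exists v. split; [| unfold v; field; exact HNz].
  apply (End_of_basis L w1 w2 basis).
  - replace (Cmult v w1) with (tcomb (1 * ux + 0 * uy - ux) (1 * uz + 0 * uw)).
    + apply lattice_tcomb. split; [exists 0%Z; ring | now rewrite Z.mul_1_l, Z.mul_0_l, Z.add_0_r].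
    + transitivity (Cminus (tcomb (1 * ux + 0 * uy) (1 * uz + 0 * uw)) (Cmult (zc ux) (tcomb 1 0)));
        [unfold tcomb; zc_push; rewrite zc_0, zc_1; ring |].
      rewrite <- HU. unfold v, tcomb. rewrite zc_0, zc_1. field. exact HNz.
  - replace (Cmult v w2) with (tcomb (0 * ux + 1 * uy) (0 * uz + 1 * uw - ux)).
    + apply lattice_tcomb. rewrite !Z.mul_1_l, !Z.mul_0_l, !Z.add_0_l. split; [exact Huy |].
      destruct Hxw as [s Es]. exists (- s)%Z. lia.
    + transitivity (Cminus (tcomb (0 * ux + 1 * uy) (0 * uz + 1 * uw)) (Cmult (zc ux) (tcomb 0 1)));
        [unfold tcomb; zc_push; rewrite zc_0, zc_1; ring |].
      rewrite <- HU. unfold v, tcomb. rewrite zc_0, zc_1. field. exact HNz.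
Qed.

Ltac divide_as H e := match type of H with (_ | ?x)%Z => replace x with e in H by ring end.

Section Matrices.

Variables (phi : C -> C) (pa pb pc pd : Z).
Hypothesis HP : forall p q, congr L (phi (tcomb p q)) (tcomb (p * pa + q * pb) (p * pc + q * pd)).

Lemma commuting_tcomb_relations u ux uy uz uw : End_lat L u ->
  (forall p q, Cmult u (tcomb p q) = tcomb (p * ux + q * uy) (p * uz + q * uw)) ->
  (forall z, Ntors L N z -> congr L (Cmult u (phi z)) (phi (Cmult u z))) ->
  (N | pc * uy - uz * pb)%Z /\ (N | pb * (ux - uw) + uy * (pd - pa))%Z.
Proof.
  intros Hu HU Hcomm.
  assert (Hc : forall p q, congr L
    (tcomb ((p * pa + q * pb) * ux + (p * pc + q * pd) * uy) ((p * pa + q * pb) * uz + (p * pc + q * pd) * uw))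
    (tcomb ((p * ux + q * uy) * pa + (p * uz + q * uw) * pb) ((p * ux + q * uy) * pc + (p * uz + q * uw) * pd))).
  { intros p q. rewrite <- HU.
    apply (congr_trans L w1 w2 basis) with (phi (Cmult u (tcomb p q))).
    - apply (congr_trans L w1 w2 basis) with (Cmult u (phi (tcomb p q))).
      + apply (congr_sym L w1 w2 basis), (congr_End L), HP. exact Hu.
      + apply Hcomm, Ntors_tcomb.
    - rewrite HU. apply HP. }
  destruct (proj1 (congr_tcomb _ _ _ _) (Hc 1%Z 0%Z)) as [K1 _].
  destruct (proj1 (congr_tcomb _ _ _ _) (Hc 0%Z 1%Z)) as [K2 _].
  divide_as K1 (pc * uy - uz * pb)%Z. divide_as K2 (pb * (ux - uw) + uy * (pd - pa))%Z.
  split; assumption.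
Qed.

Lemma sq_eps_tcomb_relation eps : EndN L N phi -> sq_eps L N eps phi ->
  (N | pa * pa + pc * pb - eps)%Z.
Proof.
  intros [Hmaps [Hwd _]] Hsq.
  assert (Hc : congr L (tcomb ((1 * pa + 0 * pb) * pa + (1 * pc + 0 * pd) * pb)
                              ((1 * pa + 0 * pb) * pc + (1 * pc + 0 * pd) * pd))
                       (tcomb eps 0)).
  { apply (congr_trans L w1 w2 basis) with (phi (phi (tcomb 1 0))).
    - apply (congr_sym L w1 w2 basis), (congr_trans L w1 w2 basis) with (phi (tcomb (1 * pa + 0 * pb) (1 * pc + 0 * pd))).
      + apply Hwd; [apply Hmaps, Ntors_tcomb | apply Ntors_tcomb | apply HP].
      + apply HP.
    - apply (congr_trans L w1 w2 basis) with (Cmult (zc eps) (tcomb 1 0)); [apply Hsq, Ntors_tcomb |].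
      apply (congr_of_eq L w1 w2 basis). unfold tcomb. zc_push. rewrite zc_0, zc_1. ring. }
  destruct (proj1 (congr_tcomb _ _ _ _) Hc) as [K3 _].
  divide_as K3 (pa * pa + pc * pb - eps)%Z. exact K3.
Qed.

End Matrices.

Lemma commuting_EndN_in_End eps phi u : prime N -> nonsquare_mod eps N ->
  EndN L N phi -> sq_eps L N eps phi -> End_lat L u ->
  (forall z, Ntors L N z -> congr L (Cmult u (phi z)) (phi (Cmult u z))) ->
  ~ (exists a v, End_lat L v /\ u = Cplus (zc a) (Cmult (zc N) v)) ->
  exists alpha, End_lat L alpha /\ forall z, Ntors L N z -> congr L (phi z) (Cmult alpha z).
Proof.
  intros HNp Heps Hphi Hsq Hu Hcomm Hns.
  destruct (EndN_tcomb phi Hphi) as [pa [pb [pc [pd HP]]]].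
  destruct (End_tcomb u Hu) as [ux [uy [uz [uw HU]]]].
  destruct (commuting_tcomb_relations phi pa pb pc pd HP u ux uy uz uw Hu HU Hcomm) as [K1 K2].
  assert (K3 := sq_eps_tcomb_relation phi pa pb pc pd HP eps Hphi Hsq).
  destruct (Zdivide_dec N uy) as [Huy | Huy].
  - exfalso. apply Hns. exists ux.
    destruct (commuting_scalar_mod_prime N eps pa pb pc pd ux uy uz uw) as [Huz Hxw]; auto.
    now apply (scalar_mod_N u ux uy uz uw).
  - destruct (commutant_mod_prime N pa pb pc pd ux uy uz uw) as [mu [lam [D1 [D2 [D3 D4]]]]]; auto.
    exists (Cplus (zc mu) (Cmult (zc lam) u)). split.
    + apply (End_add L w1 w2 basis); [apply (End_zc L w1 w2 basis) |].
      apply (End_mul L); [apply (End_zc L w1 w2 basis) | exact Hu].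
    + intros z [p [q ->]]%Ntors_tcomb_inv.
      apply (congr_trans L w1 w2 basis) with (tcomb (p * pa + q * pb) (p * pc + q * pd)); [apply HP |].
      replace (Cmult (Cplus (zc mu) (Cmult (zc lam) u)) (tcomb p q))
        with (tcomb (mu * p + lam * (p * ux + q * uy)) (mu * q + lam * (p * uz + q * uw))).
      2: { rewrite Cmult_plus_distr_r, <- Cmult_assoc, HU. unfold tcomb. zc_push. ring. }
      apply congr_tcomb. split.
      * replace (p * pa + q * pb - (mu * p + lam * (p * ux + q * uy)))%Z
          with (p * (pa - mu - lam * ux) + q * (pb - lam * uy))%Z by ring.
        apply Z.divide_add_r; apply Z.divide_mul_r; assumption.
      * replace (p * pc + q * pd - (mu * q + lam * (p * uz + q * uw)))%Z
          with (p * (pc - lam * uz) + q * (pd - mu - lam * uw))%Z by ring.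
        apply Z.divide_add_r; apply Z.divide_mul_r; assumption.
Qed.

End Torsion_coordinates.

Lemma heegner_of_commuting_End L w1 w2 N eps phi u :
  area w1 w2 <> 0%R -> lattice_basis L w1 w2 -> prime N -> nonsquare_mod eps N ->
  EndN L N phi -> sq_eps L N eps phi ->
  End_lat L u -> Im u <> 0%R -> (4 * (Im u * Im u) < IZR N * IZR N)%R ->
  (forall z, Ntors L N z -> congr L (Cmult u (phi z)) (phi (Cmult u z))) ->
  heegner L N phi.
Proof.
  intros HD basis HN Heps Hphi Hsq Hu Hiu Hbound Hcomm.
  destruct (End_lat_monogenic L w1 w2 HD basis u Hu Hiu) as [tau [t [n [Hitau [Etau HO]]]]].
  assert (Hdisc := quadratic_Im_sq tau t n Hitau Etau).
  assert (Hdisc1 : (1 <= 4 * Im tau * Im tau)%R).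
  { assert (0 < Im tau * Im tau)%R by (apply Rsqr_pos_lt; exact Hitau).
    assert (0 < 4 * n - t * t)%Z by (apply lt_IZR; lra).
    rewrite <- Hdisc. apply IZR_le. lia. }
  assert (Htau_u := order_Im_sq_le _ tau u HO Hu Hiu).
  split.
  - apply (order_conductor_coprime _ tau t n N HN Hitau Etau HO).
    apply lt_IZR. rewrite Hdisc, mult_IZR. lra.
  - apply (commuting_EndN_in_End L w1 w2 N HD basis ltac:(destruct HN; lia) eps phi u); auto.
    intros [a [v [Hv ->]]]. rewrite Im_zc_comb in Hiu, Hbound.
    assert (Hiv : Im v <> 0%R) by (intros E; apply Hiu; rewrite E; ring).
    assert (Htau_v := order_Im_sq_le _ tau v HO Hv Hiv).
    assert (HN1 : (1 < IZR N)%R) by (apply IZR_lt; destruct HN; lia).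
    nra.
Qed.

(* The hypothesis [Z.gcd m N = 1] is only needed for the moduli interpretation of the
   Hecke correspondence, not in this argument. *)
Theorem lemma4p9 (N m eps : Z) (L : C -> Prop) (phi : C -> C) :
  prime N ->
  (1 < m)%Z ->
  Z.gcd m N = 1%Z ->
  (4 * m < N * N)%Z ->
  nonsquare_mod eps N ->
  ns_pair L N eps phi ->
  in_support_diag_Hecke L N m phi ->
  heegner L N phi.
Proof.
  intros HN Hm _ Hbound Heps [[w1 [w2 [HD basis]]] [Hphi Hsq]] Hsupp.
  destruct (support_diag_Hecke_endo L w1 w2 N m phi HD basis Hm Hsupp)
    as [u [Hu [Hiu [Hnorm Hcomm]]]].
  apply (heegner_of_commuting_End L w1 w2 N eps phi u); auto.
  apply IZR_lt in Hbound. rewrite !mult_IZR in Hbound. nra.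
Qed.
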